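(* Let $\mathfrak S=(S,\xrightarrow{F},\le)$ be a complete functional WSTS. For any subset $A$ of $S$, $Post^*_{\mathfrak S}(cl(A))\subseteq cl(Post^*_{\mathfrak S}(A))$.
   Context: A complete functional WSTS: $(S,\le)$ is a well partial order which is a continuous dcpo, $F$ is a finite set of partial continuous maps $f:S\rightharpoonup S$ (domain Scott-open; $f(\bigvee D)=\bigvee f(D)$ for every directed $D\subseteq\operatorname{dom}f$), and $s\to s'$ iff $s'=f(s)$ for some $f\in F$. $Post^*_{\mathfrak S}(A)$ is the set of states reachable from elements of $A$ in zero or more steps. $cl$ denotes closure in the Scott topology (open sets: upward-closed $U$ meeting every directed set whose lub lies in $U$). *)

From Stdlib Require Import List.
Set Implicit Arguments.

Section Order.
Variable S : Type.
Variable le : S -> S -> Prop.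

Definition subset (A B : S -> Prop) : Prop := forall x, A x -> B x.

Definition partial_order : Prop :=
  (forall x, le x x) /\
  (forall x y z, le x y -> le y z -> le x z) /\
  (forall x y, le x y -> le y x -> x = y).

Definition well_partial_order : Prop :=
  partial_order /\
  forall a : nat -> S, exists i j, i < j /\ le (a i) (a j).

Definition is_upper (D : S -> Prop) (u : S) : Prop := forall d, D d -> le d u.

Definition is_lub (D : S -> Prop) (u : S) : Prop :=
  is_upper D u /\ forall v, is_upper D v -> le u v.

Definition directed (D : S -> Prop) : Prop :=
  (exists d, D d) /\
  forall x y, D x -> D y -> exists z, D z /\ le x z /\ le y z.

Definition dcpo : Prop :=
  partial_order /\ forall D, directed D -> exists u, is_lub D u.

Definition way_below (x y : S) : Prop :=
  forall D u, directed D -> is_lub D u -> le y u -> exists d, D d /\ le x d.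

Definition continuous_dcpo : Prop :=
  dcpo /\
  forall y, directed (fun x => way_below x y) /\ is_lub (fun x => way_below x y) y.

Definition upward_closed (U : S -> Prop) : Prop :=
  forall x y, U x -> le x y -> U y.

Definition scott_open (U : S -> Prop) : Prop :=
  upward_closed U /\
  forall D u, directed D -> is_lub D u -> U u -> exists d, D d /\ U d.

Definition scott_closed (C : S -> Prop) : Prop :=
  scott_open (fun x => ~ C x).

Definition scott_cl (A : S -> Prop) : S -> Prop :=
  fun x => forall C, scott_closed C -> subset A C -> C x.

(* partial maps S -> S, represented as S -> option S *)
Definition dom (f : S -> option S) : S -> Prop := fun x => exists y, f x = Some y.

Definition image (f : S -> option S) (D : S -> Prop) : S -> Prop :=
  fun y => exists d, D d /\ f d = Some y.

Definition partial_continuous (f : S -> option S) : Prop :=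
  scott_open (dom f) /\
  forall D u v, directed D -> subset D (dom f) -> is_lub D u ->
    f u = Some v -> is_lub (image f D) v.

Definition complete_functional_WSTS (F : list (S -> option S)) : Prop :=
  well_partial_order /\ continuous_dcpo /\
  forall f, In f F -> partial_continuous f.

Definition step (F : list (S -> option S)) (s s' : S) : Prop :=
  exists f, In f F /\ f s = Some s'.

Inductive reach (F : list (S -> option S)) : S -> S -> Prop :=
| reach_refl : forall s, reach F s s
| reach_step : forall s s' s'', step F s s' -> reach F s' s'' -> reach F s s''.

Definition Post_star (F : list (S -> option S)) (A : S -> Prop) : S -> Prop :=
  fun y => exists x, A x /\ reach F x y.

End Order.

(* The states from which some run leaves a Scott-closed set C form the set
   Pre*(S \ C), which is Scott-open: it is upward closed because the maps are
   monotone, and inaccessible by directed joins because each step commutes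
   with directed joins.  Its complement is thus a Scott-closed set containing
   A whenever Post*(A) lies in C, so it contains cl(A) too. *)
From Stdlib Require Import List Classical ssreflect.
Set Implicit Arguments.

Section ScottReachability.
Variable S : Type.
Variable le : S -> S -> Prop.
Hypothesis PO : partial_order le.

Let le_refl x : le x x.
Proof. by case: PO. Qed.

Let le_trans x y z : le x y -> le y z -> le x z.
Proof. by case: PO => _ [Ht _]; apply: Ht. Qed.

Lemma scott_closed_compl (U : S -> Prop) :
  scott_open le U -> scott_closed le (fun x => ~ U x).
Proof.
  move=> [Uup Uinacc]; split.
  - by move=> x y /NNPP Ux xy; apply; apply: Uup xy.
  - move=> D u Ddir Dlub /NNPP Uu.
    have [d [Dd Ud]] := Uinacc D u Ddir Dlub Uu.
    by exists d; split=> // /(_ Ud).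
Qed.

Lemma directed_meet_scott_open (D U : S -> Prop) u :
  directed le D -> is_lub le D u -> scott_open le U -> U u ->
  directed le (fun x => D x /\ U x) /\ is_lub le (fun x => D x /\ U x) u.
Proof.
  move=> Ddir Dlub [Uup Uinacc] Uu.
  have [d0 [Dd0 Ud0]] := Uinacc D u Ddir Dlub Uu.
  case: Ddir => _ Dup; case: Dlub => Dub Dleast.
  split; [split|split].
  - by exists d0.
  - move=> x y [Dx Ux] [Dy Uy].
    have [z [Dz [xz yz]]] := Dup x y Dx Dy.
    by exists z; do !split=> //; apply: Uup xz.
  - by move=> x [Dx _]; apply: Dub.
  - move=> v vub; apply: Dleast => x Dx.
    have [z [Dz [xz d0z]]] := Dup x d0 Dx Dd0.
    by apply: le_trans xz (vub z _); split=> //; apply: Uup d0z.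
Qed.

Lemma partial_continuous_monotone (f : S -> option S) x x' y :
  partial_continuous le f -> le x x' -> f x = Some y ->
  exists y', f x' = Some y' /\ le y y'.
Proof.
  move=> [[domf_up _] fcont] xx' fx.
  have [y' fx'] : dom f x' by apply: domf_up xx'; exists y.
  exists y'; split=> //.
  pose D z := z = x \/ z = x'.
  have Ddir : directed le D.
    split; first by exists x; left.
    move=> a b Da Db; exists x'; split; first by right.
    by split; [case: Da | case: Db] => ->.
  have Ddom : subset D (dom f) by move=> z [->| ->]; [exists y | exists y'].
  have Dlub : is_lub le D x'.
    split=> [z [->| ->] //|v]; last by apply; right.
  have [fDub _] := fcont D x' y' Ddir Ddom Dlub fx'.
  by apply: fDub; exists x; split; first left.
Qed.

Lemma partial_continuous_image_directed (f : S -> option S) (D : S -> Prop) u v :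
  partial_continuous le f -> directed le D -> is_lub le D u -> f u = Some v ->
  directed le (image f (fun x => D x /\ dom f x)) /\
  is_lub le (image f (fun x => D x /\ dom f x)) v.
Proof.
  move=> fc Ddir Dlub fu.
  have [Edir Elub] :=
    directed_meet_scott_open Ddir Dlub (proj1 fc) (ex_intro _ v fu).
  have Edom : subset (fun x => D x /\ dom f x) (dom f) by move=> x [].
  split; last exact: (proj2 fc _ u v Edir Edom Elub fu).
  case: Edir => [[d0 [Dd0 [w0 fd0]]] Eup].
  split.
  - by exists w0, d0; split=> //; split=> //; exists w0.
  - move=> y1 y2 [a [Ea fa]] [b [Eb fb]].
    have [z [Ez [az bz]]] := Eup a b Ea Eb.
    have [w [fz aw]] := partial_continuous_monotone fc az fa.
    have [w' [fz' bw']] := partial_continuous_monotone fc bz fb.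
    move: fz'; rewrite fz => -[ww']; subst w'.
    by exists w; do !split=> //; exists z.
Qed.

Variable F : list (S -> option S).
Hypothesis F_continuous : forall f, In f F -> partial_continuous le f.

Definition Pre_star (U : S -> Prop) : S -> Prop :=
  fun x => exists y, reach F x y /\ U y.

Lemma reach_monotone x x' y :
  reach F x y -> le x x' -> exists y', reach F x' y' /\ le y y'.
Proof.
  move=> xy; elim: xy x' => [s|s s1 s2 [f [Ff fs]] _ IH] x' sx'.
  - by exists x'; split=> //; constructor.
  - have [s1' [fx' s1s1']] :=
      partial_continuous_monotone (F_continuous _ Ff) sx' fs.
    have [y' [s1'y' s2y']] := IH _ s1s1'.
    by exists y'; split=> //; apply: reach_step s1'y'; exists f.
Qed.

Lemma Pre_star_upward_closed (U : S -> Prop) :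
  upward_closed le U -> upward_closed le (Pre_star U).
Proof.
  move=> Uup x x' [y [xy Uy]] xx'.
  have [y' [x'y' yy']] := reach_monotone xy xx'.
  by exists y'; split=> //; apply: Uup yy'.
Qed.

Lemma Pre_star_inaccessible (U : S -> Prop) u y :
  scott_open le U -> reach F u y -> U y ->
  forall D, directed le D -> is_lub le D u -> exists d, D d /\ Pre_star U d.
Proof.
  move=> [_ Uinacc] uy Uy.
  elim: uy Uy => [s|s s1 s2 [f [Ff fs]] _ IH] Uy D Ddir Dlub.
  - have [d [Dd Ud]] := Uinacc D s Ddir Dlub Uy.
    by exists d; split=> //; exists d; split=> //; constructor.
  - have [Edir Elub] :=
      partial_continuous_image_directed (F_continuous _ Ff) Ddir Dlub fs.
    have [e [[d [[Dd _] fd]] [w [ew Uw]]]] := IH Uy _ Edir Elub.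
    exists d; split=> //; exists w; split=> //.
    by apply: reach_step ew; exists f; rewrite fd.
Qed.

Lemma scott_open_Pre_star (U : S -> Prop) :
  scott_open le U -> scott_open le (Pre_star U).
Proof.
  move=> Uo; split; first exact: Pre_star_upward_closed (proj1 Uo).
  move=> D u Ddir Dlub [y [uy Uy]].
  exact: Pre_star_inaccessible uy Uy D Ddir Dlub.
Qed.

End ScottReachability.

Theorem lemma5p2 (S : Type) (le : S -> S -> Prop) (F : list (S -> option S)) :
  complete_functional_WSTS le F ->
  forall A : S -> Prop,
    subset (Post_star F (scott_cl le A)) (scott_cl le (Post_star F A)).
Proof.
  move=> [[PO _] [_ F_cont]] A y [x [clAx xy]] C Cclosed AC.
  pose escape := Pre_star F (fun w => ~ C w).
  have escape_closed : scott_closed le (fun z => ~ escape z).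
    exact/scott_closed_compl/scott_open_Pre_star.
  have A_stays : subset A (fun z => ~ escape z).
    by move=> a Aa [w [aw nCw]]; apply/nCw/AC; exists a.
  apply: NNPP => nCy.
  by apply: (clAx _ escape_closed A_stays); exists y.
Qed.
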